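(* Let $\mathcal{V}$ be a quaternionic two-sided Banach algebra with unit $1\neq0$, let $a\in\mathcal{V}$ and $q\in\partial\sigma_S(a)$. Then there exists a sequence $(b_n)$ of elements of $\mathcal{V}$ with $\|b_n\|=1$ and $$\lim_{n}(a^{2}-2Re(q)a+|q|^{2}1_{\mathcal{V}})b_{n}=\lim_{n}b_{n}(a^{2}-2Re(q)a+|q|^{2}1_{\mathcal{V}})=0.$$
   Context: $\mathbb{H}$ denotes the quaternions, $Re(q)$ the real part and $|q|$ the norm of $q$. A quaternionic two-sided Banach algebra with unit is a two-sided $\mathbb{H}$-vector space $\mathcal{V}$ with an associative product satisfying $x(y+z)=xy+xz$, $(x+y)z=xz+yz$, $q(xy)=(qx)y$, $(xy)q=x(yq)$, complete for a norm with $\|qx\|=|q|\|x\|=\|xq\|$, $\|xy\|\le\|x\|\|y\|$, with unit $1_{\mathcal{V}}$, $\|1_{\mathcal{V}}\|=1$. $\mathcal{V}^{-1}$ is the set of invertible elements. The S-spectrum of $a$ is $\sigma_S(a)=\{q\in\mathbb{H}: a^2-2Re(q)a+|q|^21_{\mathcal{V}}\notin\mathcal{V}^{-1}\}$, and $\partial\sigma_S(a)$ is its boundary in $\mathbb{H}$. *)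

From mathcomp Require Import all_boot all_order all_algebra.
From mathcomp Require Import all_classical all_reals all_analysis.
Set Implicit Arguments. Unset Strict Implicit. Unset Printing Implicit Defensive.
Import Order.TTheory GRing.Theory Num.Theory.
Local Open Scope classical_set_scope.
Local Open Scope ring_scope.

Record quat (R : realType) := Quat { qre : R; qi : R; qj : R; qk : R }.

Section Quat.
Variable R : realType.
Definition qadd (p q : quat R) : quat R :=
  Quat (qre p + qre q) (qi p + qi q) (qj p + qj q) (qk p + qk q).
Definition qopp (p : quat R) : quat R := Quat (- qre p) (- qi p) (- qj p) (- qk p).
Definition qsub (p q : quat R) : quat R := qadd p (qopp q).
Definition qmul (p q : quat R) : quat R :=
  Quat (qre p * qre q - qi p * qi q - qj p * qj q - qk p * qk q)
       (qre p * qi q + qi p * qre q + qj p * qk q - qk p * qj q)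
       (qre p * qj q - qi p * qk q + qj p * qre q + qk p * qi q)
       (qre p * qk q + qi p * qj q - qj p * qi q + qk p * qre q).
Definition qofR (r : R) : quat R := Quat r 0 0 0.
Definition qone : quat R := qofR 1.
Definition Req (q : quat R) : R := qre q.
Definition qnorm (q : quat R) : R :=
  Num.sqrt (qre q ^+ 2 + qi q ^+ 2 + qj q ^+ 2 + qk q ^+ 2).
End Quat.

Record is_qbanach_alg (R : realType) (V : zmodType)
    (lmul : quat R -> V -> V) (rmul : V -> quat R -> V)
    (mul : V -> V -> V) (one : V) (nrm : V -> R) : Prop := {
  lmulDr : forall p x y, lmul p (x + y) = lmul p x + lmul p y;
  lmulDl : forall p q x, lmul (qadd p q) x = lmul p x + lmul q x;
  lmulA  : forall p q x, lmul (qmul p q) x = lmul p (lmul q x);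
  lmul1  : forall x, lmul (qone R) x = x;
  rmulDl : forall x y p, rmul (x + y) p = rmul x p + rmul y p;
  rmulDr : forall x p q, rmul x (qadd p q) = rmul x p + rmul x q;
  rmulA  : forall x p q, rmul x (qmul p q) = rmul (rmul x p) q;
  rmul1  : forall x, rmul x (qone R) = x;
  lrmulA : forall p x q, lmul p (rmul x q) = rmul (lmul p x) q;
  mulA   : forall x y z, mul x (mul y z) = mul (mul x y) z;
  mulDr  : forall x y z, mul x (y + z) = mul x y + mul x z;
  mulDl  : forall x y z, mul (x + y) z = mul x z + mul y z;
  lmul_mul : forall q x y, lmul q (mul x y) = mul (lmul q x) y;
  rmul_mul : forall q x y, rmul (mul x y) q = mul x (rmul y q);
  mul1x  : forall x, mul one x = x;
  mulx1  : forall x, mul x one = x;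
  nrm_eq0 : forall x, nrm x = 0 -> x = 0;
  nrm0    : nrm 0 = 0;
  nrmD    : forall x y, nrm (x + y) <= nrm x + nrm y;
  nrm_lmul : forall q x, nrm (lmul q x) = qnorm q * nrm x;
  nrm_rmul : forall q x, nrm (rmul x q) = qnorm q * nrm x;
  nrmM    : forall x y, nrm (mul x y) <= nrm x * nrm y;
  nrm1    : nrm one = 1;
  complete : forall u : nat -> V,
    (forall e : R, 0 < e -> exists N : nat, forall m n : nat,
        (N <= m)%N -> (N <= n)%N -> nrm (u m - u n) < e) ->
    exists l : V, (fun n => nrm (u n - l)) @ \oo --> 0
}.

Definition qinvertible (V : zmodType) (mul : V -> V -> V) (one : V) (x : V) :=
  exists y : V, mul x y = one /\ mul y x = one.

Definition Qop (R : realType) (V : zmodType) (lmul : quat R -> V -> V)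
    (mul : V -> V -> V) (one : V) (a : V) (q : quat R) : V :=
  mul a a - lmul (qofR (2 * Req q)) a + lmul (qofR (qnorm q ^+ 2)) one.

Definition S_spectrum (R : realType) (V : zmodType) (lmul : quat R -> V -> V)
    (mul : V -> V -> V) (one : V) (a : V) : quat R -> Prop :=
  fun q => ~ qinvertible mul one (Qop lmul mul one a q).

Definition qboundary (R : realType) (S : quat R -> Prop) (q : quat R) : Prop :=
  forall e : R, 0 < e ->
    (exists p, qnorm (qsub p q) < e /\ S p) /\
    (exists p, qnorm (qsub p q) < e /\ ~ S p).

(* Since q is a boundary point of the S-spectrum, Q_q(a) = a^2 - 2Re(q)a + |q|^2
   is not invertible (the invertible elements form an open set, by the Neumann
   series, and p |-> Q_p(a) is continuous), yet it is a limit of invertible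
   elements Q_p(a) with p outside the spectrum.  If y is invertible with inverse
   z and x is not, then |z| |x - y| >= 1, so b = z / |z| has norm 1 and
   |xb|, |bx| <= 2 |x - y|.  Running y along Q_p(a) -> Q_q(a) gives the
   sequence (b_n). *)

From Pilot Require Import Defs.
From mathcomp Require Import all_boot all_order all_algebra.
From mathcomp Require Import all_classical all_reals all_analysis.
From mathcomp Require Import ring.
Import Order.TTheory GRing.Theory Num.Theory.
Local Open Scope classical_set_scope.
Local Open Scope ring_scope.
Set Implicit Arguments. Unset Strict Implicit. Unset Printing Implicit Defensive.

Section AdditiveMorphism.
Variables (U W : zmodType) (f : U -> W).
Hypothesis fD : {morph f : a b / a + b}.

Lemma morph_addB : {morph f : a b / a - b}.
Proof. by move=> a b /=; apply/eqP; rewrite eq_sym subr_eq -fD subrK. Qed.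

Lemma morph_add0 : f 0 = 0.
Proof. by rewrite -(subrr (0 : U)) morph_addB subrr. Qed.

Lemma morph_addN : {morph f : a / - a}.
Proof. by move=> a; rewrite -[- a]sub0r morph_addB morph_add0 sub0r. Qed.

Lemma morph_addMn a n : f (a *+ n) = f a *+ n.
Proof. by elim: n => [|n IH]; rewrite ?mulr0n ?morph_add0 // !mulrS fD IH. Qed.

Lemma morph_addMz a k : f (a *~ k) = f a *~ k.
Proof. by case: k => n; rewrite ?NegzE ?mulrNz ?morph_addN -!pmulrn morph_addMn. Qed.

End AdditiveMorphism.

Section Quaternion.
Variable R : realType.
Implicit Types (p q : quat R) (r s : R).

Definition qdot p q := qre p * qre q + qi p * qi q + qj p * qj q + qk p * qk q.

Lemma qdot_ge0 q : 0 <= qdot q q.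
Proof. by rewrite /qdot -!expr2 !addr_ge0 ?sqr_ge0. Qed.

Lemma qnorm_ge0 q : 0 <= qnorm q.
Proof. exact: sqrtr_ge0. Qed.

Lemma qnormE q : qnorm q = Num.sqrt (qdot q q).
Proof. by rewrite /qnorm /qdot -!expr2. Qed.

Lemma qnorm_sq q : qnorm q ^+ 2 = qdot q q.
Proof. by rewrite qnormE sqr_sqrtr ?qdot_ge0. Qed.

Lemma qnormR r : qnorm (qofR r) = `|r|.
Proof. by rewrite qnormE /qdot /= !mulr0 !addr0 -expr2 sqrtr_sqr. Qed.

Lemma qofRD r s : qofR (r + s) = qadd (qofR r) (qofR s).
Proof. by rewrite /qadd /= addr0. Qed.

Lemma qre_le_qnorm q : `|qre q| <= qnorm q.
Proof.
rewrite qnormE -sqrtr_sqr ler_sqrt ?qdot_ge0 // /qdot -!expr2.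
by rewrite -!addrA lerDl !addr_ge0 ?sqr_ge0.
Qed.

(* Cauchy-Schwarz, from Lagrange's identity. *)
Lemma qdot_le p q : `|qdot p q| <= qnorm p * qnorm q.
Proof.
rewrite !qnormE -sqrtrM ?qdot_ge0 // -sqrtr_sqr ler_sqrt ?mulr_ge0 ?qdot_ge0 //.
rewrite -subr_ge0.
have -> : qdot p p * qdot q q - qdot p q ^+ 2 =
    (qre p * qi q - qi p * qre q) ^+ 2 + (qre p * qj q - qj p * qre q) ^+ 2
  + (qre p * qk q - qk p * qre q) ^+ 2 + (qi p * qj q - qj p * qi q) ^+ 2
  + (qi p * qk q - qk p * qi q) ^+ 2 + (qj p * qk q - qk p * qj q) ^+ 2.
  by rewrite /qdot; ring.
by rewrite !addr_ge0 ?sqr_ge0.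
Qed.

Lemma qnorm_sqB p q :
  `|qnorm p ^+ 2 - qnorm q ^+ 2| <=
    qnorm (qsub p q) * (qnorm (qsub p q) + qnorm q *+ 2).
Proof.
have -> : qnorm p ^+ 2 - qnorm q ^+ 2 =
    qnorm (qsub p q) ^+ 2 + qdot (qsub p q) q *+ 2.
  by rewrite !qnorm_sq /qdot /=; ring.
rewrite mulrDr -expr2 mulrnAr; apply: le_trans (ler_normD _ _) _.
by rewrite ger0_norm ?sqr_ge0 // lerD2l normrMn lerMn2r qdot_le.
Qed.

End Quaternion.

Section QuaternionicBanachAlgebra.
Variables (R : realType) (V : zmodType).
Variables (lmul : quat R -> V -> V) (rmul : V -> quat R -> V).
Variables (mul : V -> V -> V) (one : V) (nrm : V -> R).
Hypothesis HV : is_qbanach_alg lmul rmul mul one nrm.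
Local Notation invertible := (qinvertible mul one).

Lemma mulxB x : {morph mul x : y z / y - z}.
Proof. exact/morph_addB/(mulDr HV). Qed.

Lemma mulBx z : {morph mul^~ z : x y / x - y}.
Proof. by apply: morph_addB => x y; apply: (mulDl HV). Qed.

Lemma mulx0 x : mul x 0 = 0.
Proof. exact/morph_add0/(mulDr HV). Qed.

Lemma mul0x x : mul 0 x = 0.
Proof. by apply: (morph_add0 (f := mul^~ x)) => y z; apply: (mulDl HV). Qed.

Lemma lmulR_additive v : {morph (fun r => lmul (qofR r) v) : r s / r + s}.
Proof. by move=> r s; rewrite /= qofRD (lmulDl HV). Qed.

Lemma rmulR_additive v : {morph (fun r => rmul v (qofR r)) : r s / r + s}.
Proof. by move=> r s; rewrite /= qofRD (rmulDr HV). Qed.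

Lemma lmulRB r s v : lmul (qofR (r - s)) v = lmul (qofR r) v - lmul (qofR s) v.
Proof. exact: (morph_addB (lmulR_additive v)). Qed.

Lemma lmulRMn r n v : lmul (qofR (r *+ n)) v = lmul (qofR r) v *+ n.
Proof. exact: (morph_addMn (lmulR_additive v)). Qed.

Lemma nrm_lmulR r v : nrm (lmul (qofR r) v) = `|r| * nrm v.
Proof. by rewrite (nrm_lmul HV) qnormR. Qed.

Lemma nrm_rmulR r v : nrm (rmul v (qofR r)) = `|r| * nrm v.
Proof. by rewrite (nrm_rmul HV) qnormR. Qed.

Lemma nrmN v : nrm (- v) = nrm v.
Proof.
have -> : - v = lmul (qofR (- 1)) v.
  by rewrite (morph_addN (lmulR_additive v)) (lmul1 HV).
by rewrite nrm_lmulR normrN normr1 mul1r.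
Qed.

Lemma nrmB u v : nrm (u - v) = nrm (v - u).
Proof. by rewrite -nrmN opprB. Qed.

Lemma nrm_ge0 v : 0 <= nrm v.
Proof.
have := nrmD HV v (- v); rewrite subrr (nrm0 HV) nrmN -mulr2n -mulr_natr.
by rewrite pmulr_lge0.
Qed.

Lemma nrmMn v n : nrm (v *+ n) = nrm v *+ n.
Proof.
by rewrite -{1}(lmul1 HV v) -lmulRMn nrm_lmulR normr_nat mulr_natl.
Qed.

Lemma nrm_le_cvg0_eq0 d (w : nat -> R) :
  w @ \oo --> 0 -> (forall n, nrm d <= w n) -> d = 0.
Proof.
move=> w0 dw; apply: (nrm_eq0 HV); apply/eqP; rewrite eq_le nrm_ge0 andbT.
by apply: (cvgr_to_ge w0); apply: nearW.
Qed.

Lemma additive_bounded_eq0 (f : R -> V) M :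
  {morph f : s t / s + t} -> f 1 = 0 ->
  (forall t, 0 <= t < 1 -> nrm (f t) <= M) -> forall r, f r = 0.
Proof.
move=> fD f1 fM r.
have f_int (k : int) : f k%:~R = 0 by rewrite (morph_addMz fD) f1 mul0rz.
have bound n : nrm (f r) *+ n.+1 <= M.
  rewrite -nrmMn -(morph_addMn fD).
  rewrite -[r *+ _](subrK (Num.floor (r *+ n.+1))%:~R) fD f_int addr0.
  apply: fM; rewrite subr_ge0 floor_le /= ltrBlDr addrC.
  by have := floorD1_gt (r *+ n.+1); rewrite intrD.
apply: (@nrm_le_cvg0_eq0 _ (fun n => M * harmonic n)).
  by rewrite -(mulr0 M); exact: cvgMl_tmp cvg_harmonic.
by move=> n; rewrite /= ler_pdivlMr // mulr_natr bound.
Qed.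

(* Not one of the axioms: only [lrmulA] relates the two scalar actions. *)
Lemma lmul_rmulR r x : lmul (qofR r) x = rmul x (qofR r).
Proof.
apply/eqP; rewrite -subr_eq0; apply/eqP.
pose D s := lmul (qofR s) x - rmul x (qofR s).
apply: (@additive_bounded_eq0 D (nrm x *+ 2)) => [s t||t /andP[t0 t1]].
- by rewrite /D lmulR_additive rmulR_additive opprD addrACA.
- by rewrite /D (lmul1 HV) (rmul1 HV) subrr.
rewrite /D mulr2n; apply: le_trans (nrmD HV _ _) _.
rewrite nrmN nrm_lmulR nrm_rmulR ger0_norm //.
by apply: lerD; rewrite ler_piMl ?nrm_ge0 // ltW.
Qed.

Lemma iter_mulSr u n : iter n.+1 (mul u) one = mul (iter n (mul u) one) u.
Proof.
elim: n => [|n IH]; first by rewrite /= (mulx1 HV) (mul1x HV).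
by rewrite iterS [in LHS]IH (Defs.mulA HV).
Qed.

Lemma nrm_iter_mul u n : nrm (iter n (mul u) one) <= nrm u ^+ n.
Proof.
elim: n => [|n IH]; first by rewrite (nrm1 HV).
rewrite iterS exprS; apply: le_trans (nrmM HV _ _) _.
by rewrite ler_wpM2l ?nrm_ge0.
Qed.

Lemma mul_one_sub_geom u n :
  mul (one - u) (\sum_(i < n) iter i (mul u) one) = one - iter n (mul u) one.
Proof.
elim: n => [|n IH]; first by rewrite big_ord0 mulx0 subrr.
rewrite big_ord_recr /= (mulDr HV) IH mulBx (mul1x HV) -iterS.
by rewrite addrA subrK.
Qed.

Lemma geom_mul_one_sub u n :
  mul (\sum_(i < n) iter i (mul u) one) (one - u) = one - iter n (mul u) one.
Proof.
elim: n => [|n IH]; first by rewrite big_ord0 mul0x subrr.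
rewrite big_ord_recr /= (mulDl HV) IH mulxB (mulx1 HV) -iter_mulSr.
by rewrite addrA subrK.
Qed.

Lemma nrm_geomB u n k : nrm u < 1 ->
  nrm (\sum_(i < n + k) iter i (mul u) one - \sum_(i < n) iter i (mul u) one)
    <= nrm u ^+ n / (1 - nrm u).
Proof.
move=> u1; set t := nrm u.
have t1 : 0 < 1 - t by rewrite subr_gt0.
suff : nrm (\sum_(i < n + k) iter i (mul u) one - \sum_(i < n) iter i (mul u) one)
    <= (t ^+ n - t ^+ (n + k)) / (1 - t).
  move/le_trans; apply; rewrite ler_pM2r ?invr_gt0 // gerDl oppr_le0.
  by rewrite exprn_ge0 ?nrm_ge0.
elim: k => [|k IH]; first by rewrite addn0 !subrr (nrm0 HV) mul0r.
rewrite addnS big_ord_recr /= addrAC; apply: le_trans (nrmD HV _ _) _.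
apply: le_trans (lerD IH (nrm_iter_mul u _)) _.
rewrite exprS le_eqVlt; apply/orP; left; apply/eqP; field.
by rewrite gt_eqF.
Qed.

Lemma cvg_dominated_cauchy (u : nat -> V) (w : nat -> R) :
  w @ \oo --> 0 -> (forall n k, nrm (u (n + k)%N - u n) <= w n) ->
  exists l, (fun n => nrm (u n - l)) @ \oo --> 0.
Proof.
move=> w0 uw; apply: (complete HV) => e e0.
have [N _ wN] := cvgr0_norm_lt _ w0 _ e0.
exists N => m n Nm Nn.
wlog nm : m n Nm Nn / (n <= m)%N => [hw|].
  by case: (leqP n m) => [|/ltnW] nm; [|rewrite nrmB]; apply: hw.
rewrite -(subnKC nm); apply: le_lt_trans (uw n _) _.
exact: le_lt_trans (ler_norm _) (wN n Nn).
Qed.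

(* The inverse is the sum of the Neumann series [\sum_i u ^+ i]. *)
Lemma one_sub_invertible u : nrm u < 1 -> invertible (one - u).
Proof.
move=> u1; set t := nrm u.
pose S n := \sum_(i < n) iter i (mul u) one.
have t0 : (fun n => t ^+ n) @ \oo --> 0.
  by apply: cvg_expr; rewrite ger0_norm ?nrm_ge0.
have [l Sl] : exists l, (fun n => nrm (S n - l)) @ \oo --> 0.
  apply: (@cvg_dominated_cauchy _ (fun n => t ^+ n / (1 - t))); last first.
    by move=> n k; apply: nrm_geomB.
  by rewrite -(mul0r (1 - t)^-1); apply: cvgMr_tmp.
have w0 : (fun n => nrm (one - u) * nrm (S n - l) + t ^+ n) @ \oo --> 0.
  by rewrite -(addr0 0) -{1}(mulr0 (nrm (one - u))); apply: cvgD => //; apply: cvgMl_tmp.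
exists l; split; apply/eqP; rewrite -subr_eq0; apply/eqP; apply: (nrm_le_cvg0_eq0 w0) => n.
- have -> : mul (one - u) l - one = mul (one - u) (l - S n) - iter n (mul u) one.
    by rewrite mulxB mul_one_sub_geom opprB addrA addrAC addrK.
  apply: le_trans (nrmD HV _ _) _; rewrite nrmN.
  by apply: lerD (nrm_iter_mul _ _); apply: le_trans (nrmM HV _ _) _; rewrite nrmB.
- have -> : mul l (one - u) - one = mul (l - S n) (one - u) - iter n (mul u) one.
    by rewrite mulBx geom_mul_one_sub opprB addrA addrAC addrK.
  apply: le_trans (nrmD HV _ _) _; rewrite nrmN.
  by apply: lerD (nrm_iter_mul _ _); apply: le_trans (nrmM HV _ _) _; rewrite nrmB mulrC.
Qed.

Lemma invertible_perturb y z x : mul y z = one -> mul z y = one ->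
  nrm z * nrm (x - y) < 1 -> invertible x.
Proof.
move=> yz zy small.
have [w [w1 w2]] : invertible (one - mul z (y - x)).
  by apply: one_sub_invertible; apply: le_lt_trans (nrmM HV _ _) _; rewrite nrmB.
have yx : mul y (one - mul z (y - x)) = x.
  by rewrite mulxB (mulx1 HV) (Defs.mulA HV) yz (mul1x HV) opprB addrC subrK.
have zx : mul z x = one - mul z (y - x) by rewrite -{1}yx (Defs.mulA HV) zy (mul1x HV).
exists (mul w z); split; last by rewrite -(Defs.mulA HV) zx.
by rewrite -{1}yx -(Defs.mulA HV) (Defs.mulA HV _ w) w1 (mul1x HV).
Qed.

Lemma approx_zero_divisor x y z : mul y z = one -> mul z y = one ->
  ~ invertible x ->
  exists b, [/\ nrm b = 1, nrm (mul x b) <= nrm (x - y) *+ 2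
                         & nrm (mul b x) <= nrm (x - y) *+ 2].
Proof.
move=> yz zy xN.
have big : 1 <= nrm z * nrm (x - y).
  by rewrite leNgt; apply/negP => /(invertible_perturb yz zy).
have z0 : 0 < nrm z.
  rewrite lt_neqAle nrm_ge0 andbT; apply/eqP => z0.
  by move: big; rewrite -z0 mul0r ler10.
set c := (nrm z)^-1.
have c0 : 0 < c by rewrite invr_gt0.
have bound w : nrm w <= nrm z * nrm (x - y) ->
    `|c| * nrm (w + one) <= nrm (x - y) *+ 2.
  move=> wb; rewrite gtr0_norm //; apply: le_trans (ler_wpM2l (ltW c0) (nrmD HV _ _)) _.
  rewrite (nrm1 HV) mulrDr mulr1 mulr2n.
  apply: lerD; first by rewrite /c ler_pdivrMl.
  by rewrite -[c]mulr1 /c ler_pdivrMl.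
exists (lmul (qofR c) z); split.
- by rewrite nrm_lmulR gtr0_norm // mulVf // gt_eqF.
- rewrite lmul_rmulR -(rmul_mul HV) nrm_rmulR.
  rewrite -[mul x z](subrK (mul y z)) -mulBx yz; apply: bound.
  by rewrite mulrC; apply: (nrmM HV).
- rewrite -(lmul_mul HV) nrm_lmulR.
  by rewrite -[mul z x](subrK (mul z y)) -mulxB zy; apply: bound; apply: (nrmM HV).
Qed.

Lemma topological_zero_divisor x : ~ invertible x ->
  (forall e, 0 < e -> exists2 y, invertible y & nrm (x - y) < e) ->
  exists b : nat -> V,
    [/\ forall n, nrm (b n) = 1,
        (fun n => nrm (mul x (b n))) @ \oo --> 0
      & (fun n => nrm (mul (b n) x)) @ \oo --> 0].
Proof.
move=> xN approx.
have step n : exists b, [/\ nrm b = 1, nrm (mul x b) <= harmonic n *+ 2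
                                    & nrm (mul b x) <= harmonic n *+ 2].
  have [y [z [yz zy]] xy] := approx _ (harmonic_gt0 n).
  have [b [b1 xb bx]] := approx_zero_divisor yz zy xN.
  by exists b; split; [|apply: le_trans xb _|apply: le_trans bx _]; rewrite // lerMn2r ltW.
have [b hb] := choice step.
have h0 : (fun n => harmonic n *+ 2 : R) @ \oo --> 0.
  by rewrite -(addr0 0); under eq_fun do rewrite mulr2n; apply: cvgD; apply: cvg_harmonic.
have squeeze (f : nat -> R) : (forall n, 0 <= f n <= harmonic n *+ 2) ->
    f @ \oo --> 0.
  by move=> f0; apply: (squeeze_cvgr _ (cvg_cst (0 : R^o)) h0); apply: nearW.
exists b; split => [n||]; first by case: (hb n).
- by apply: squeeze => n; case: (hb n) => _ xb _; rewrite nrm_ge0.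
- by apply: squeeze => n; case: (hb n) => _ _ bx; rewrite nrm_ge0.
Qed.

Lemma nrm_QopB a p q :
  nrm (Qop lmul mul one a p - Qop lmul mul one a q) <=
    qnorm (qsub p q) * (nrm a *+ 2 + (qnorm (qsub p q) + qnorm q *+ 2) * nrm one).
Proof.
have -> : Qop lmul mul one a p - Qop lmul mul one a q =
    lmul (qofR (2 * Req q - 2 * Req p)) a
  + lmul (qofR (qnorm p ^+ 2 - qnorm q ^+ 2)) one.
  rewrite /Qop !lmulRB opprD opprB addrACA; congr (_ + _).
  by rewrite addrC addrA subrK.
rewrite mulrDr; apply: le_trans (nrmD HV _ _) (lerD _ _); rewrite nrm_lmulR.
- rewrite -mulrBr normrM normr_nat mulrnAr -mulrnAl ler_wpM2r ?nrm_ge0 //.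
  rewrite mulr_natl lerMn2r /=.
  by have := qre_le_qnorm (qsub p q); rewrite /= distrC.
- by rewrite mulrA ler_wpM2r ?nrm_ge0 ?qnorm_sqB.
Qed.

Lemma Qop_near a q e : 0 < e -> exists2 d, 0 < d &
  forall p, qnorm (qsub p q) < d ->
    nrm (Qop lmul mul one a p - Qop lmul mul one a q) < e.
Proof.
move=> e0; set K := nrm a *+ 2 + (1 + qnorm q *+ 2) * nrm one.
have K0 : 0 <= K by rewrite addr_ge0 ?mulr_ge0 ?addr_ge0 ?mulrn_wge0 ?nrm_ge0 ?qnorm_ge0.
have K1 : 0 < K + 1 by rewrite ltr_wpDl.
exists (Num.min 1 (e / (K + 1))) => [|p]; first by rewrite lt_min ltr01 divr_gt0.
rewrite lt_min => /andP[d1 dK]; apply: le_lt_trans (nrm_QopB a p q) _.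
apply: (@le_lt_trans _ _ (qnorm (qsub p q) * (K + 1))); last by rewrite -ltr_pdivlMr.
rewrite ler_wpM2l ?qnorm_ge0 //; apply: (@le_trans _ _ K); last by rewrite lerDl.
by rewrite lerD2l ler_wpM2r ?nrm_ge0 // lerD2r ltW.
Qed.

Lemma Qop_boundary_not_invertible a q :
  qboundary (S_spectrum lmul mul one a) q -> ~ invertible (Qop lmul mul one a q).
Proof.
move=> hq [z [xz zx]].
have z1 : 0 < nrm z + 1 by rewrite ltr_wpDl ?nrm_ge0.
have [d d0 hd] : exists2 d, 0 < d & forall p, qnorm (qsub p q) < d ->
    nrm (Qop lmul mul one a p - Qop lmul mul one a q) < (nrm z + 1)^-1.
  by apply: Qop_near; rewrite invr_gt0.
have [[p [pq pS]] _] := hq d d0.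
apply: pS; apply: (invertible_perturb xz zx).
have := hd p pq; rewrite -[X in _ < X]mulr1 ltr_pdivlMl // => small.
by apply: le_lt_trans small; rewrite ler_wpM2r ?nrm_ge0 ?lerDl.
Qed.

Lemma Qop_boundary_approx a q : qboundary (S_spectrum lmul mul one a) q ->
  forall e, 0 < e -> exists2 y, invertible y & nrm (Qop lmul mul one a q - y) < e.
Proof.
move=> hq e e0; have [d d0 hd] := Qop_near a q e0.
have [_ [p [pq pNS]]] := hq d d0.
by exists (Qop lmul mul one a p); [apply: contrapT | rewrite nrmB hd].
Qed.

End QuaternionicBanachAlgebra.

Theorem mainTheorem5 (R : realType) (V : zmodType)
    (lmul : quat R -> V -> V) (rmul : V -> quat R -> V)
    (mul : V -> V -> V) (one : V) (nrm : V -> R)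
    (HV : is_qbanach_alg lmul rmul mul one nrm)
    (one_neq0 : one <> 0)
    (a : V) (q : quat R)
    (hq : qboundary (S_spectrum lmul mul one a) q) :
  exists b : nat -> V,
    (forall n, nrm (b n) = 1) /\
    (fun n => nrm (mul (Qop lmul mul one a q) (b n))) @ \oo --> 0 /\
    (fun n => nrm (mul (b n) (Qop lmul mul one a q))) @ \oo --> 0.
Proof.
have [b [b1 xb bx]] := topological_zero_divisor HV
  (Qop_boundary_not_invertible HV hq) (Qop_boundary_approx HV hq).
by exists b.
Qed.
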